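(* Let $n\ge 1$, let $n_0>0$ and $N_+\in\mathbb{R}^n$ with positive entries, let $M_1>0$, and let $L\in\mathbb{R}^n$ have finite entries. For $A\in\mathbb{R}^n$ set $a_0(A)=M_1-\mathbf{1}^\top A$, $b_0(A)=n_0-a_0(A)$, $B(A)=N_+-A$, and $$G(A)=-L^\top A+f(a_0(A))+\sum_{i=1}^n f(B_i(A))+\sum_{i=1}^n f(A_i)+f(b_0(A)),$$ where $f(x)=x\log x-x$ for $x>0$ and $f(0)=0$. Let $\mathcal{D}=\{A\in\mathbb{R}^n: 0\le A\le N_+ \text{ componentwise},\ a_0(A)\ge 0,\ b_0(A)\ge 0\}$ be the domain of $G$. Suppose that some $A\in\mathbb{R}^n$ satisfies $N_+>A$ componentwise, $M_1>\mathbf{1}^\top A$, and $n_0>a_0(A)$. Then $G$ has a unique global minimizer on $\mathcal{D}$.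
   Context: This is the Greenland–Longnecker pseudo-count problem for log odds ratios: $n$ alternative exposure levels, $n_0$ total subjects at the reference exposure, $N_+$ total subjects at the alternative exposures, $M_1$ total cases, $L$ reported log odds ratios; $A$ are pseudo-cases at alternative exposures, $a_0$ pseudo-cases at the reference exposure, $B$ and $b_0$ the corresponding non-cases. The gradient of $G$ is $g(A)=-L-\log(a_0(A))\mathbf{1}-\log(B(A))+\log(A)+\log(b_0(A))\mathbf{1}$ (componentwise logarithms), whose root the Greenland–Longnecker Newton method seeks. $\mathbf{1}$ denotes the all-ones vector in $\mathbb{R}^n$. *)

From mathcomp Require Import all_boot all_order all_algebra.
From mathcomp Require Import all_classical all_reals all_analysis.
Set Implicit Arguments. Unset Strict Implicit. Unset Printing Implicit Defensive.
Import Order.TTheory GRing.Theory Num.Theory.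
Local Open Scope ring_scope.

Section GL.
Variables (R : realType) (n : nat).

(* f(x) = x log x - x for x > 0, f(0) = 0 (value for x < 0 is irrelevant on
   the domain; we set it to 0). *)
Definition fGL (x : R) : R := if 0 < x then x * ln x - x else 0.

Definition a0 (M1 : R) (A : 'I_n -> R) : R := M1 - \sum_i A i.
Definition b0 (n0 M1 : R) (A : 'I_n -> R) : R := n0 - a0 M1 A.
Definition Bv (Np : 'I_n -> R) (A : 'I_n -> R) : 'I_n -> R := fun i => Np i - A i.

Definition G (n0 M1 : R) (Np L : 'I_n -> R) (A : 'I_n -> R) : R :=
  - (\sum_i L i * A i) + fGL (a0 M1 A)
  + (\sum_i fGL (Bv Np A i)) + (\sum_i fGL (A i)) + fGL (b0 n0 M1 A).

Definition domD (n0 M1 : R) (Np : 'I_n -> R) (A : 'I_n -> R) : Prop :=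
  (forall i, 0 <= A i /\ A i <= Np i) /\ 0 <= a0 M1 A /\ 0 <= b0 n0 M1 A.

End GL.

From mathcomp Require Import all_boot all_order all_algebra.
From mathcomp Require Import all_classical all_reals all_analysis.
From mathcomp Require Import ring lra.
Set Implicit Arguments.
Unset Strict Implicit.
Unset Printing Implicit Defensive.

Import Order.TTheory GRing.Theory Num.Theory.
Import numFieldNormedType.Exports.
Local Open Scope ring_scope.

(* Existence: G is continuous and the feasibility hypothesis makes the compact
   polytope D nonempty.  Uniqueness: f is strictly convex on [0, +oo) (Gibbs'
   inequality u (ln u - ln m) >= u - m), so every term of G is midpoint convex
   on D and sum_i f(A_i) strictly so in any coordinate where two points differ;
   the midpoint of two distinct minimizers would then do strictly better. *)

Section fGL_theory.
Variable R : realType.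
Implicit Types x y u m t : R.

(* Holds at 0 because the library's ln is 0 on nonpositive reals. *)
Lemma fGLE x : 0 <= x -> fGL x = x * ln x - x.
Proof.
by rewrite le_eqVlt => /predU1P[<-|x0]; rewrite /fGL ?ltxx ?mul0r ?subr0 ?x0.
Qed.

Lemma sub_lt_mul_lnB u m : 0 <= u -> 0 < m -> u != m ->
  u - m < u * (ln u - ln m).
Proof.
rewrite le_eqVlt => /predU1P[<- m0 _|u0 m0 um].
  by rewrite mul0r sub0r oppr_lt0.
have lnmu : ln m - ln u != 0.
  by rewrite subr_eq0 (inj_in_eq (@ln_inj R)) ?posrE // eq_sym.
have := expR_gt1Dx lnmu; rewrite expRB !lnK ?posrE // -(ltr_pM2l u0) mulrCA.
by rewrite divff ?gt_eqF // mulr1; lra.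
Qed.

Lemma sub_le_mul_lnB u m : 0 <= u -> 0 < m -> u - m <= u * (ln u - ln m).
Proof.
move=> u0 m0; have [->|um] := eqVneq u m; first by rewrite !subrr mulr0.
exact/ltW/sub_lt_mul_lnB.
Qed.

Lemma fGL_midpoint_lt x y : 0 <= x -> 0 <= y -> x != y ->
  2 * fGL ((x + y) / 2) < fGL x + fGL y.
Proof.
move=> x0 y0 xy; set m := (x + y) / 2.
have m0 : 0 < m by rewrite /m; move: xy; case: (ltgtP x y) => // ? _; lra.
have xm : x != m.
  by apply: contraNN xy => /eqP xm; apply/eqP; rewrite /m in xm; lra.
have := sub_lt_mul_lnB x0 m0 xm; have := sub_le_mul_lnB y0 m0.
have : x * ln m + y * ln m = 2 * m * ln m by rewrite -mulrDl /m; field.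
rewrite !fGLE ?(ltW m0) //; lra.
Qed.

Lemma fGL_midpoint_le x y : 0 <= x -> 0 <= y ->
  2 * fGL ((x + y) / 2) <= fGL x + fGL y.
Proof.
move=> x0 y0; have [<-|xy] := eqVneq x y; last exact/ltW/fGL_midpoint_lt.
have -> : (x + x) / 2 = x by field.
lra.
Qed.

Lemma sum_fGL_midpoint_le (I : finType) (x y : I -> R) :
  (forall i, 0 <= x i) -> (forall i, 0 <= y i) ->
  2 * \sum_i fGL ((x i + y i) / 2) <= \sum_i fGL (x i) + \sum_i fGL (y i).
Proof.
move=> x0 y0; rewrite mulr_sumr -big_split; apply: ler_sum => i _.
exact: fGL_midpoint_le.
Qed.

Lemma sum_fGL_midpoint_lt (I : finType) (x y : I -> R) (i : I) :
  (forall i, 0 <= x i) -> (forall i, 0 <= y i) -> x i != y i ->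
  2 * \sum_i fGL ((x i + y i) / 2) < \sum_i fGL (x i) + \sum_i fGL (y i).
Proof.
move=> x0 y0 xy; rewrite mulr_sumr -big_split (bigD1 i) // [ltRHS](bigD1 i) //=.
apply: ltr_leD; first exact: fGL_midpoint_lt.
by apply: ler_sum => j _; exact: fGL_midpoint_le.
Qed.

(* From expR v >= v ^+ 2 / 2 at v = - ln t. *)
Lemma sqr_xlnx_le t : 0 < t -> t <= 1 -> (t * ln t) ^+ 2 <= 2 * t.
Proof.
move=> t0 t1; have lnt : 0 <= - ln t by rewrite oppr_ge0 ln_le0.
have := expR_ge1Dxn 1 lnt; rewrite expRN lnK ?posrE // sqrrN.
rewrite -(ler_pM2r t0) mulVf ?gt_eqF // => h.
have : ln t ^+ 2 * t <= 2 by move: h; rewrite (_ : 2`!%:R = 2) //; lra.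
move: (ln t) => l; nra.
Qed.

Lemma fGL_continuous0 : {for 0, continuous (@fGL R)}.
Proof.
rewrite /prop_for /continuous_at fGLE // mul0r subr0.
apply/cvgrPdist_lt => e e0; near=> t.
rewrite sub0r normrN; have [t0|t0] := leP t 0.
  by rewrite /fGL (ltNge 0 t) t0 normr0.
have t1 : t < 1 by near: t; exact: lt_nbhsl.
have te2 : t < e ^+ 2 / 8.
  by near: t; apply: lt_nbhsl; rewrite divr_gt0 // exprn_gt0.
have te : t < e / 2 by near: t; apply: lt_nbhsl; rewrite divr_gt0.
rewrite fGLE ?ltW //; have := sqr_xlnx_le t0 (ltW t1).
have : t * ln t <= 0 by rewrite pmulr_rle0 // ln_le0 // ltW.
move: (t * ln t) => a a0 a2; rewrite ler0_norm; nra.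
Unshelve. all: by end_near.
Qed.

Lemma continuous_fGL : continuous (@fGL R).
Proof.
move=> x; case: (ltgtP x 0) => [x0|x0|->]; last exact: fGL_continuous0.
- apply: cvg_near_cst; near=> y.
  have y0 : y < 0 by near: y; exact: lt_nbhsl.
  by rewrite /fGL ltNge (ltW y0) ltNge (ltW x0).
- have xlnx : {for x, continuous (fun y : R => y * ln y - y)}.
    exact: cvgB (cvgM cvg_id (continuous_ln x0)) cvg_id.
  rewrite /prop_for /continuous_at fGLE ?ltW //.
  apply: cvg_trans xlnx; apply: near_eq_cvg; near=> y.
  have y0 : 0 < y by near: y; exact: lt_nbhsr.
  by rewrite fGLE // ltW.
Unshelve. all: by end_near.
Qed.

End fGL_theory.

Section domain.
Local Open Scope classical_set_scope.
Import ArrowAsProduct.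
Variables (R : realType) (n : nat) (n0 M1 : R) (Np L : 'I_n -> R).

Lemma continuous_sum (T : topologicalType) (I : Type) (r : seq I)
    (F : I -> T -> R) :
  (forall i, continuous (F i)) -> continuous (fun x => \sum_(i <- r) F i x).
Proof.
move=> F_cont; apply: (@continuous_big R I +%R 0 xpredT add_continuous).
by move=> i _; exact: F_cont.
Qed.

Lemma continuous_a0 : continuous (a0 M1 : ('I_n -> R) -> R).
Proof.
move=> A; apply: continuousB; first exact: cst_continuous.
by apply: continuous_sum => i; exact: proj_continuous.
Qed.

Lemma continuous_b0 : continuous (b0 n0 M1 : ('I_n -> R) -> R).
Proof.
by move=> A; apply: continuousB; [exact: cst_continuous|exact: continuous_a0].
Qed.

Lemma continuous_G : continuous (G n0 M1 Np L).
Proof.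
have coord i : continuous (fun A : 'I_n -> R => A i) by exact: proj_continuous.
have fGL_comp (g : ('I_n -> R) -> R) :
    continuous g -> continuous (@fGL R \o g).
  move=> g_cont A; apply: continuous_comp; first exact: g_cont.
  exact: continuous_fGL.
have -> : G n0 M1 Np L = (fun A : 'I_n -> R => - \sum_i L i * A i)
    + (@fGL R \o a0 M1) + (fun A => \sum_i fGL (Bv Np A i))
    + (fun A => \sum_i fGL (A i)) + (@fGL R \o b0 n0 M1) by [].
move=> A; repeat apply: continuousD.
- apply: continuousN; apply: continuous_sum => i B.
  by apply: continuousM; [exact: cst_continuous|exact: coord].
- exact: fGL_comp continuous_a0 A.
- apply: continuous_sum => i; apply: fGL_comp => B.
  by apply: continuousB; [exact: cst_continuous|exact: coord].
- by apply: continuous_sum => i; exact: fGL_comp.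
- exact: fGL_comp continuous_b0 A.
Qed.

Lemma compact_domD : compact (domD n0 M1 Np).
Proof.
have -> : domD n0 M1 Np = [set A | forall i, `[0, Np i] (A i)]
    `&` ([set A | 0 <= a0 M1 A] `&` [set A | 0 <= b0 n0 M1 A]).
  by apply/seteqP; split=> A [box dom]; split=> // i; move: (box i);
    rewrite /= in_itv => /andP.
apply: compact_closedI.
  exact: (@tychonoff _ (fun=> R) _ (fun i => @segment_compact R 0 (Np i))).
apply: closedI; apply: preimage_closed (@closed_ge R 0) => A _.
  exact: continuous_a0.
exact: continuous_b0.
Qed.

Lemma domD_nonempty : 0 <= n0 -> 0 <= M1 -> (forall i, 0 <= Np i) ->
  M1 - n0 <= \sum_i Np i -> domD n0 M1 Np !=set0.
Proof.
move=> n0_ge0 M1_ge0 Np_ge0; set S := \sum_i Np i => feas.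
have [SM1|M1S] := leP S M1.
  exists Np; split; first by move=> i; split.
  by rewrite /b0 /a0 -/S; split; lra.
have S_gt0 : 0 < S by exact: le_lt_trans M1S.
have t_ge0 : 0 <= M1 / S by rewrite divr_ge0 // ltW.
have t_le1 : M1 / S <= 1 by rewrite ler_pdivrMr // mul1r ltW.
have sumE : \sum_i Np i * (M1 / S) = M1.
  by rewrite -mulr_suml -/S mulrCA divff ?mulr1 ?gt_eqF.
exists (fun i => Np i * (M1 / S)); split.
  by move=> i; split; [rewrite mulr_ge0|rewrite ler_piMr].
by rewrite /b0 /a0 sumE; split; lra.
Qed.

Lemma exists_argmin_G : domD n0 M1 Np !=set0 ->
  exists2 A, domD n0 M1 Np A &
    forall B, domD n0 M1 Np B -> G n0 M1 Np L A <= G n0 M1 Np L B.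
Proof.
move=> D0; have [A DA Amin] :=
  compact_EVT_min D0 compact_domD (continuous_subspaceT continuous_G).
by exists A; [exact: set_mem|move=> B DB; apply: Amin; exact: mem_set].
Qed.

Definition midpoint (A B : 'I_n -> R) : 'I_n -> R := fun i => (A i + B i) / 2.

Lemma a0_midpoint A B : a0 M1 (midpoint A B) = (a0 M1 A + a0 M1 B) / 2.
Proof. by rewrite /a0 /midpoint -mulr_suml big_split /=; field. Qed.

Lemma b0_midpoint A B :
  b0 n0 M1 (midpoint A B) = (b0 n0 M1 A + b0 n0 M1 B) / 2.
Proof. by rewrite /b0 a0_midpoint; field. Qed.

Lemma domD_midpoint A B :
  domD n0 M1 Np A -> domD n0 M1 Np B -> domD n0 M1 Np (midpoint A B).
Proof.
move=> [A_box [a0A b0A]] [B_box [a0B b0B]].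
rewrite /domD a0_midpoint b0_midpoint; split; last by split; lra.
move=> i; have [? ?] := A_box i; have [? ?] := B_box i.
by rewrite /midpoint; split; lra.
Qed.

Lemma G_midpoint_lt A B i :
  domD n0 M1 Np A -> domD n0 M1 Np B -> A i != B i ->
  2 * G n0 M1 Np L (midpoint A B) < G n0 M1 Np L A + G n0 M1 Np L B.
Proof.
move=> [A_box [a0A b0A]] [B_box [a0B b0B]] AB.
have linE : 2 * \sum_j L j * midpoint A B j
    = \sum_j L j * A j + \sum_j L j * B j.
  rewrite mulr_sumr -big_split; apply: eq_bigr => j _ /=.
  by rewrite /midpoint; field.
have BvE : \sum_j fGL (Bv Np (midpoint A B) j)
    = \sum_j fGL ((Bv Np A j + Bv Np B j) / 2).
  by apply: eq_bigr => j _; congr fGL; rewrite /Bv /midpoint; field.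
have Bv_ge0 C : (forall j, 0 <= C j /\ C j <= Np j) -> forall j, 0 <= Bv Np C j.
  by move=> C_box j; have [_ ?] := C_box j; rewrite /Bv subr_ge0.
have := fGL_midpoint_le a0A a0B; have := fGL_midpoint_le b0A b0B.
have := sum_fGL_midpoint_le (Bv_ge0 _ A_box) (Bv_ge0 _ B_box).
have := sum_fGL_midpoint_lt (fun j => (A_box j).1) (fun j => (B_box j).1) AB.
rewrite /G a0_midpoint b0_midpoint BvE; lra.
Qed.

Lemma argmin_G_unique A B : domD n0 M1 Np A -> domD n0 M1 Np B ->
  (forall C, domD n0 M1 Np C -> G n0 M1 Np L A <= G n0 M1 Np L C) ->
  (forall C, domD n0 M1 Np C -> G n0 M1 Np L B <= G n0 M1 Np L C) ->
  A = B.
Proof.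
move=> DA DB Amin Bmin; apply: funext => i; have [//|AB] := eqVneq (A i) (B i).
have := G_midpoint_lt DA DB AB; have DAB := domD_midpoint DA DB.
have := Amin _ DAB; have := Bmin _ DAB; lra.
Qed.

End domain.

Theorem theorem1 (R : realType) (n : nat) (hn : (0 < n)%N)
  (n0 M1 : R) (Np L : 'I_n -> R)
  (hn0 : 0 < n0) (hNp : forall i, 0 < Np i) (hM1 : 0 < M1)
  (hfeas : exists A : 'I_n -> R,
      (forall i, A i < Np i) /\ \sum_i A i < M1 /\ a0 M1 A < n0) :
  exists A : 'I_n -> R,
    domD n0 M1 Np A /\
    (forall A' : 'I_n -> R, domD n0 M1 Np A' -> G n0 M1 Np L A <= G n0 M1 Np L A') /\
    (forall A' : 'I_n -> R, domD n0 M1 Np A' ->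
       (forall A'' : 'I_n -> R, domD n0 M1 Np A'' -> G n0 M1 Np L A' <= G n0 M1 Np L A'') ->
       A' = A).
Proof.
have D0 : domD n0 M1 Np !=set0%classic.
  apply: domD_nonempty; [exact: ltW | exact: ltW | by move=> i; exact: ltW |].
  have [A [A_lt [_ a0A]]] := hfeas.
  have : \sum_i A i <= \sum_i Np i by apply: ler_sum => i _; exact: ltW.
  rewrite /a0 in a0A; lra.
have [A DA Amin] := exists_argmin_G L D0.
exists A; split=> //; split=> // B DB Bmin.
exact: argmin_G_unique DB DA Bmin Amin.
Qed.
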